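(* There is an absolute constant $C>0$ (independent of $n$, $f$, $g$, $x$) such that for all real-valued $f,g\in C^{3}[0,1]$, all $x\in[0,1]$ and $n\in\mathbb{N}$, $$n\left|B_{n}(fg)(x)-B_{n}(f)(x)B_{n}(g)(x)-\frac{x(1-x)}{n}f'(x)g'(x)\right|\le C\,x(1-x)\frac{1}{\sqrt{n}}\Big[\|(fg)'''\|+\|f''\|\,\|g''\|+\|g\|\,\|f'''\|+\|f\|\,\|g'''\|\Big].$$ In particular the left-hand side is $O\big(x(1-x)/\sqrt{n}\big)$.
   Context: For $f:[0,1]\to\mathbb{R}$ the Bernstein polynomials are $B_{n}(f)(x)=\sum_{k=0}^{n}\binom{n}{k}x^{k}(1-x)^{n-k}f(k/n)$. $\|\cdot\|$ denotes the uniform norm on $C[0,1]$. *)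

From Stdlib Require Import Reals.
From Coquelicot Require Import Coquelicot.
Open Scope R_scope.

Definition bernstein (n : nat) (f : R -> R) (x : R) : R :=
  sum_f_R0 (fun k => Binomial.C n k * x ^ k * (1 - x) ^ (n - k) * f (INR k / INR n)) n.

Definition C3 (f : R -> R) : Prop :=
  (forall k x, (k <= 3)%nat -> ex_derive_n f k x) /\
  (forall x, continuous (Derive_n f 3) x).

Definition unorm (h : R -> R) : R :=
  real (Lub_Rbar (fun y => exists x, 0 <= x <= 1 /\ y = Rabs (h x))).

(* B_n(h)(x) is the mean of h(K/n) for K ~ Binomial(n, x).  With d = K/n - x, E d = 0 and
   E d^2 = x(1-x)/n give
     B_n(fg) - B_n f B_n g - x(1-x)/n f'g'
       = E[(f(K/n) - f x)(g(K/n) - g x) - f'g' d^2] - E[f(K/n) - f x - f' d] E[g(K/n) - g x - g' d].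
   Taylor's formula bounds the two factors of the product by ||f''||/2 E d^2 and ||g''||/2 E d^2,
   and the first term by N/6 E|d|^3, where N bounds the third derivative
   (fg)''' - f''' g(x) - f(x) g''' of t |-> (f t - f x)(g t - g x).  Finally AM-GM gives
   2 E|d|^3 <= E d^2 / sqrt n + sqrt n E d^4, which is O(x(1-x) n^(-3/2)) by the fourth central
   moment of the binomial law. *)

From Stdlib Require Import Reals Lra Lia.
From Coquelicot Require Import Coquelicot.
Open Scope R_scope.

(* [binom_mean n p phi] is the mean of [phi K] for [K ~ Binomial(n, p)], computed by
   conditioning on the first trial. *)
Fixpoint binom_mean (n : nat) (p : R) (phi : nat -> R) : R :=
  match n with
  | O => phi O
  | S m => (1 - p) * binom_mean m p phi + p * binom_mean m p (fun k => phi (S k))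
  end.

Lemma binom_mean_ext n p phi psi :
  (forall k, (k <= n)%nat -> phi k = psi k) -> binom_mean n p phi = binom_mean n p psi.
Proof.
  revert phi psi; induction n as [|n IH]; intros phi psi H; simpl.
  - apply H; lia.
  - rewrite (IH phi psi), (IH (fun k => phi (S k)) (fun k => psi (S k))); auto;
      intros; apply H; lia.
Qed.

Lemma binom_mean_plus n p phi psi :
  binom_mean n p (fun k => phi k + psi k) = binom_mean n p phi + binom_mean n p psi.
Proof.
  revert phi psi; induction n as [|n IH]; intros phi psi; simpl; [ring|].
  rewrite (IH phi psi), (IH (fun k => phi (S k)) (fun k => psi (S k))). ring.
Qed.

Lemma binom_mean_scal n p a phi :
  binom_mean n p (fun k => a * phi k) = a * binom_mean n p phi.
Proof.
  revert phi; induction n as [|n IH]; intros phi; simpl; [ring|].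
  rewrite (IH phi), (IH (fun k => phi (S k))). ring.
Qed.

Lemma binom_mean_const n p c : binom_mean n p (fun _ => c) = c.
Proof. induction n as [|n IH]; simpl; [|rewrite IH]; ring. Qed.

Lemma binom_mean_le n p phi psi : 0 <= p <= 1 ->
  (forall k, (k <= n)%nat -> phi k <= psi k) -> binom_mean n p phi <= binom_mean n p psi.
Proof.
  intro Hp; revert phi psi; induction n as [|n IH]; intros phi psi H; simpl.
  - apply H; lia.
  - assert (H0 := IH phi psi (fun k Hk => H k ltac:(lia))).
    assert (HS := IH (fun k => phi (S k)) (fun k => psi (S k)) (fun k Hk => H (S k) ltac:(lia))).
    nra.
Qed.

Lemma binom_mean_abs_bound n p phi psi : 0 <= p <= 1 ->
  (forall k, (k <= n)%nat -> Rabs (phi k) <= psi k) ->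
  Rabs (binom_mean n p phi) <= binom_mean n p psi.
Proof.
  intros Hp H. apply Rabs_le. split.
  - rewrite <- (Rmult_1_l (binom_mean n p psi)), Ropp_mult_distr_l, <- binom_mean_scal.
    apply binom_mean_le; auto. intros k Hk. specialize (H k Hk).
    pose proof (Rle_abs (- phi k)) as Hk'. rewrite Rabs_Ropp in Hk'. lra.
  - apply binom_mean_le; auto. intros k Hk. eapply Rle_trans; [apply Rle_abs | auto].
Qed.

Lemma binom_mean_sum n p phi : binom_mean n p phi =
  sum_f_R0 (fun k => Binomial.C n k * p ^ k * (1 - p) ^ (n - k) * phi k) n.
Proof.
  assert (C_n0 : forall m, Binomial.C m 0 = 1).
  { intro m. unfold Binomial.C. rewrite Nat.sub_0_r. simpl. field. apply INR_fact_neq_0. }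
  assert (C_nn : forall m, Binomial.C m m = 1).
  { intro m. unfold Binomial.C. rewrite Nat.sub_diag. simpl. field. apply INR_fact_neq_0. }
  revert phi; induction n as [|n IH]; intro phi; cbn [binom_mean].
  { simpl. rewrite C_n0. ring. }
  rewrite !IH. destruct n as [|m].
  { simpl. rewrite !C_n0, C_nn. simpl. ring. }
  set (A := fun k => Binomial.C (S m) k * p ^ k * (1 - p) ^ (S m - k) * phi k).
  set (B := fun k => Binomial.C (S m) k * p ^ k * (1 - p) ^ (S m - k) * phi (S k)).
  set (T := fun k => Binomial.C (S (S m)) k * p ^ k * (1 - p) ^ (S (S m) - k) * phi k).
  rewrite (decomp_sum A (S m)), (tech5 B m), (decomp_sum T (S (S m))) by lia.
  simpl pred. rewrite (tech5 (fun i => T (S i)) m).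
  assert (Pascal : sum_f_R0 (fun i => T (S i)) m
    = sum_f_R0 (fun i => B i * p) m + sum_f_R0 (fun i => A (S i) * (1 - p)) m).
  { rewrite <- plus_sum. apply sum_eq. intros i Hi. unfold A, B, T.
    rewrite <- (pascal (S m) i) by lia.
    replace (S (S m) - S i)%nat with (S (S m - S i)) by lia.
    replace (S m - i)%nat with (S (S m - S i)) by lia.
    simpl. ring. }
  rewrite Pascal, <- !scal_sum. unfold A, B, T.
  rewrite !C_n0, !C_nn, !Nat.sub_diag, !Nat.sub_0_r. simpl. ring.
Qed.

Lemma bernstein_binom_mean n h x :
  bernstein n h x = binom_mean n x (fun k => h (INR k / INR n)).
Proof. now rewrite binom_mean_sum. Qed.

Definition binom_central_moment (n : nat) (p : R) (j : nat) : R :=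
  binom_mean n p (fun k => (INR k - INR n * p) ^ j).

Lemma binom_mean_sum_f_R0 n p (F : nat -> nat -> R) j :
  binom_mean n p (fun k => sum_f_R0 (fun i => F i k) j)
  = sum_f_R0 (fun i => binom_mean n p (F i)) j.
Proof.
  induction j as [|j IH]; simpl; [reflexivity|].
  now rewrite binom_mean_plus, IH.
Qed.

Lemma binom_mean_shift_pow n p (Y : nat -> R) c j :
  binom_mean n p (fun k => (Y k + c) ^ j)
  = sum_f_R0 (fun i => Binomial.C j i * c ^ (j - i) * binom_mean n p (fun k => Y k ^ i)) j.
Proof.
  rewrite (binom_mean_ext _ _ _ (fun k => sum_f_R0
             (fun i => Binomial.C j i * c ^ (j - i) * Y k ^ i) j))
    by (intros; rewrite binomial; apply sum_eq; intros; ring).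
  rewrite binom_mean_sum_f_R0. apply sum_eq; intros. apply binom_mean_scal.
Qed.

Lemma binom_central_moment_S n p j : binom_central_moment (S n) p j =
  (1 - p) * binom_mean n p (fun k => (INR k - INR n * p + - p) ^ j)
  + p * binom_mean n p (fun k => (INR k - INR n * p + (1 - p)) ^ j).
Proof.
  unfold binom_central_moment; cbn [binom_mean].
  f_equal; f_equal; apply binom_mean_ext; intros; rewrite !S_INR; f_equal; ring.
Qed.

Lemma binom_central_moments n p :
  binom_central_moment n p 1 = 0 /\
  binom_central_moment n p 2 = INR n * p * (1 - p) /\
  binom_central_moment n p 3 = INR n * p * (1 - p) * (1 - 2 * p) /\
  binom_central_moment n p 4 = INR n * p * (1 - p) * (1 + 3 * (INR n - 2) * p * (1 - p)).
Proof.
  induction n as [|n [H1 [H2 [H3 H4]]]].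
  - unfold binom_central_moment; simpl; repeat split; ring.
  - assert (H0 : binom_central_moment n p 0 = 1) by apply (binom_mean_const n p 1).
    rewrite !binom_central_moment_S, !binom_mean_shift_pow. cbn [sum_f_R0].
    fold (binom_central_moment n p 0) (binom_central_moment n p 1) (binom_central_moment n p 2)
      (binom_central_moment n p 3) (binom_central_moment n p 4).
    rewrite H0, H1, H2, H3, H4, S_INR. unfold Binomial.C. simpl. repeat split; field.
Qed.

Lemma binom_mean_grid_pow n p j : (1 <= n)%nat ->
  binom_mean n p (fun k => (INR k / INR n - p) ^ j) = binom_central_moment n p j / INR n ^ j.
Proof.
  intro Hn. assert (HN : 0 < INR n) by (apply lt_0_INR; lia).
  unfold binom_central_moment, Rdiv at 2. rewrite Rmult_comm, <- binom_mean_scal.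
  apply binom_mean_ext; intros k _.
  rewrite <- pow_inv, <- Rpow_mult_distr. f_equal. field. lra.
Qed.

Lemma binom_mean_grid_dev n p : (1 <= n)%nat ->
  binom_mean n p (fun k => INR k / INR n - p) = 0.
Proof.
  intro Hn. rewrite (binom_mean_ext _ _ _ (fun k => (INR k / INR n - p) ^ 1)) by (intros; ring).
  rewrite binom_mean_grid_pow, (proj1 (binom_central_moments n p)) by exact Hn. field.
  apply not_0_INR; lia.
Qed.

Lemma binom_mean_grid_sq n p : (1 <= n)%nat ->
  binom_mean n p (fun k => (INR k / INR n - p) ^ 2) = p * (1 - p) / INR n.
Proof.
  intro Hn. rewrite binom_mean_grid_pow, (proj1 (proj2 (binom_central_moments n p))) by exact Hn.
  field. apply not_0_INR; lia.
Qed.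

Lemma abs_cube_le s d : 0 < s -> 2 * Rabs d ^ 3 <= d ^ 2 / s + s * d ^ 4.
Proof.
  intro Hs. rewrite <- (pow2_abs d). replace (d ^ 4) with ((Rabs d ^ 2) ^ 2)
    by (rewrite pow2_abs; ring).
  set (a := Rabs d).
  assert (0 <= (a * (1 - s * a)) ^ 2 / s) by (apply Rdiv_le_0_compat; [apply pow2_ge_0 | lra]).
  replace (a ^ 2 / s + s * (a ^ 2) ^ 2) with ((a * (1 - s * a)) ^ 2 / s + 2 * a ^ 3)
    by (field; lra).
  lra.
Qed.

Lemma binom_mean_grid_abs_cube_le n p : 0 <= p <= 1 -> (1 <= n)%nat ->
  binom_mean n p (fun k => Rabs (INR k / INR n - p) ^ 3)
  <= 2 * (p * (1 - p)) / (INR n * sqrt (INR n)).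
Proof.
  intros Hp Hn.
  assert (HN : 1 <= INR n) by (apply (le_INR 1); lia).
  set (s := sqrt (INR n)).
  assert (Hs : 0 < s) by (apply sqrt_lt_R0; lra).
  assert (Hss : s * s = INR n) by (apply sqrt_sqrt; lra).
  eapply Rle_trans.
  { apply (binom_mean_le _ _ _ (fun k => / (2 * s) * (INR k / INR n - p) ^ 2
                                         + s / 2 * (INR k / INR n - p) ^ 4)); auto.
    intros k _. set (d := INR k / INR n - p). pose proof (abs_cube_le s d Hs).
    replace (/ (2 * s) * d ^ 2 + s / 2 * d ^ 4) with ((d ^ 2 / s + s * d ^ 4) / 2)
      by (field; lra).
    lra. }
  rewrite binom_mean_plus, !binom_mean_scal, binom_mean_grid_sq, binom_mean_grid_pow by exact Hn.
  rewrite (proj2 (proj2 (proj2 (binom_central_moments n p)))), <- Hss.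
  set (q := p * (1 - p)).
  assert (Hq : 0 <= q <= 1 / 4) by (unfold q; pose proof (pow2_ge_0 (p - 1 / 2)); nra).
  assert (Hs1 : 1 <= s) by nra.
  match goal with |- ?L <= _ =>
    replace L with (q / (s * s * s) * ((1 + (1 + 3 * (s * s - 2) * q) / (s * s)) / 2))
      by (unfold q; field; lra) end.
  replace (2 * q / (s * s * s)) with (q / (s * s * s) * 2) by (field; lra).
  apply Rmult_le_compat_l; [apply Rdiv_le_0_compat; [lra | nra]|].
  assert ((1 + 3 * (s * s - 2) * q) / (s * s) <= 3) by (apply Rle_div_l; nra).
  lra.
Qed.

Definition derive_chain (D : nat -> R -> R) (N : nat) : Prop :=
  forall k t, (k <= N)%nat -> is_derive (D k) t (D (S k) t).

Lemma derive_chain_Derive_n D N : derive_chain D N ->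
  forall k, (k <= S N)%nat ->
  (forall t, Derive_n (D 0%nat) k t = D k t) /\ (forall t, ex_derive_n (D 0%nat) k t).
Proof.
  intros HD k; induction k as [|k IH]; intro Hk; [split; reflexivity|].
  destruct (IH ltac:(lia)) as [E _]. split; intro t; simpl.
  - rewrite (Derive_ext _ _ _ E). apply is_derive_unique, HD. lia.
  - apply (ex_derive_ext (D k)); [intros; symmetry; apply E|].
    exists (D (S k) t). apply HD; lia.
Qed.

Lemma derive_chain_reflect D N : derive_chain D N ->
  derive_chain (fun k t => (-1) ^ k * D k (- t)) N.
Proof.
  intros HD k t Hk.
  assert (Hc := is_derive_comp (D k) Ropp t _ (-1) (HD k (- t) Hk)
                  ltac:(auto_derive; auto; ring)).
  replace ((-1) ^ S k * D (S k) (- t)) with ((-1) ^ k * scal (-1) (D (S k) (- t)))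
    by (unfold scal; simpl; unfold mult; simpl; ring).
  now apply (is_derive_scal (fun s => D k (- s))).
Qed.

Definition taylor_poly (D : nat -> R -> R) (N : nat) (x y : R) : R :=
  sum_f_R0 (fun m => (y - x) ^ m / INR (Factorial.fact m) * D m x) N.

Lemma taylor_lagrange_lt D N x y : derive_chain D N -> x < y ->
  exists z, x < z < y /\
    D 0%nat y = taylor_poly D N x y
                + (y - x) ^ S N / INR (Factorial.fact (S N)) * D (S N) z.
Proof.
  intros HD Hxy.
  destruct (Taylor_Lagrange (D 0%nat) N x y Hxy) as [z [Hz E]].
  { intros t _ k Hk. apply (derive_chain_Derive_n D N HD k Hk). }
  exists z. split; [exact Hz|]. rewrite E. unfold taylor_poly. f_equal.
  - apply sum_eq; intros. f_equal. apply (derive_chain_Derive_n D N HD); lia.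
  - f_equal. apply (derive_chain_Derive_n D N HD); lia.
Qed.

(* For [y < x], expand [t |-> D 0 (- t)] from [- x] to [- y]. *)
Lemma taylor_lagrange D N x y : derive_chain D N ->
  exists z, Rmin x y <= z <= Rmax x y /\
    D 0%nat y = taylor_poly D N x y
                + (y - x) ^ S N / INR (Factorial.fact (S N)) * D (S N) z.
Proof.
  intro HD. destruct (Rtotal_order x y) as [Hlt|[Heq|Hgt]].
  - destruct (taylor_lagrange_lt D N x y HD Hlt) as [z [Hz E]].
    exists z. rewrite Rmin_left, Rmax_right; [split|..]; lra.
  - subst y. exists x. rewrite Rmin_left, Rmax_left by lra. split; [lra|].
    assert (E : forall M, sum_f_R0 (fun m => 0 ^ m / INR (Factorial.fact m) * D m x) M
                          = D 0%nat x).
    { induction M as [|M IH]; simpl sum_f_R0; [simpl; field|].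
      rewrite IH. unfold Rdiv; ring. }
    unfold taylor_poly. rewrite Rminus_diag, E, pow_ne_zero by lia. unfold Rdiv; ring.
  - destruct (taylor_lagrange_lt _ N (- x) (- y) (derive_chain_reflect D N HD))
      as [z [Hz E]]; [lra|].
    exists (- z). rewrite Rmin_right, Rmax_left by lra. split; [lra|].
    unfold taylor_poly in *. rewrite Ropp_involutive, pow_O, Rmult_1_l in E. rewrite E.
    assert (Hpow : forall m, (- y - - x) ^ m * (-1) ^ m = (y - x) ^ m)
      by (intro; rewrite <- Rpow_mult_distr; f_equal; ring).
    f_equal.
    + apply sum_eq; intros m _. rewrite Ropp_involutive, <- Hpow. field. apply INR_fact_neq_0.
    + rewrite <- Hpow. field. apply INR_fact_neq_0.
Qed.

Lemma taylor_remainder_le D N M a b x y : derive_chain D N ->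
  (forall z, a <= z <= b -> Rabs (D (S N) z) <= M) -> a <= x <= b -> a <= y <= b ->
  Rabs (D 0%nat y - taylor_poly D N x y)
  <= M / INR (Factorial.fact (S N)) * Rabs (y - x) ^ S N.
Proof.
  intros HD HM Hx Hy.
  destruct (taylor_lagrange D N x y HD) as [z [Hz ->]].
  assert (Hzab : a <= z <= b) by (unfold Rmin, Rmax in Hz; destruct Rle_dec; lra).
  assert (Hfact := INR_fact_lt_0 (S N)).
  replace (_ + _ - _) with ((y - x) ^ S N / INR (Factorial.fact (S N)) * D (S N) z) by ring.
  rewrite Rabs_mult, Rabs_div, <- RPow_abs, (Rabs_pos_eq (INR _)) by lra.
  replace (M / _ * _) with (Rabs (y - x) ^ S N / INR (Factorial.fact (S N)) * M) by (field; lra).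
  apply Rmult_le_compat_l; [apply Rdiv_le_0_compat; [apply pow_le, Rabs_pos|lra]|].
  now apply HM.
Qed.

(* The supremum defining [unorm h] is attained, so [Lub_Rbar] is finite. *)
Lemma unorm_ge h : (forall t, 0 <= t <= 1 -> continuous h t) ->
  forall t, 0 <= t <= 1 -> Rabs (h t) <= unorm h.
Proof.
  intros Hc t Ht.
  destruct (continuity_ab_maj (fun t => Rabs (h t)) 0 1 ltac:(lra)) as [m [Hm Hm01]].
  { intros c Hc'. apply continuity_pt_filterlim, continuous_Rabs_comp, Hc, Hc'. }
  unfold unorm. set (E := fun y => exists x, 0 <= x <= 1 /\ y = Rabs (h x)).
  destruct (Lub_Rbar_correct E) as [Hub Hlub].
  assert (H1 := Hub (Rabs (h t)) (ex_intro _ t (conj Ht eq_refl))).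
  assert (H2 : Rbar_le (Lub_Rbar E) (Rabs (h m))).
  { apply Hlub. intros y [x [Hx ->]]. now apply Hm. }
  destruct (Lub_Rbar E); simpl in *; tauto.
Qed.

Lemma unorm_ge0 h : (forall t, 0 <= t <= 1 -> continuous h t) -> 0 <= unorm h.
Proof.
  intro Hc. apply Rle_trans with (Rabs (h 0)); [apply Rabs_pos | apply unorm_ge; auto; lra].
Qed.

Lemma C3_derive_chain f : C3 f -> derive_chain (Derive_n f) 2.
Proof. intros [Hf _] k t Hk. apply Derive_correct, (Hf (S k) t); lia. Qed.

Lemma C3_continuous f k t : C3 f -> (k <= 3)%nat -> continuous (Derive_n f k) t.
Proof.
  intros Hf Hk. destruct (Nat.le_gt_cases k 2) as [Hk2|Hk3].
  - apply (@ex_derive_continuous R_AbsRing R_NormedModule).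
    exists (Derive_n f (S k) t). now apply C3_derive_chain.
  - replace k with 3%nat by lia. apply (proj2 Hf).
Qed.

Lemma C3_unorm_ge f k t : C3 f -> (k <= 3)%nat -> 0 <= t <= 1 ->
  Rabs (Derive_n f k t) <= unorm (Derive_n f k).
Proof. intros Hf Hk. apply unorm_ge. intros s _. now apply C3_continuous. Qed.

Lemma C3_unorm_ge0 f k : C3 f -> (k <= 3)%nat -> 0 <= unorm (Derive_n f k).
Proof. intros Hf Hk. apply unorm_ge0. intros t _. now apply C3_continuous. Qed.

Definition leibniz3 (U V : nat -> R -> R) (k : nat) (t : R) : R :=
  match k with
  | 0 => U 0%nat t * V 0%nat t
  | 1 => U 1%nat t * V 0%nat t + U 0%nat t * V 1%nat t
  | 2 => U 2%nat t * V 0%nat t + 2 * (U 1%nat t * V 1%nat t) + U 0%nat t * V 2%nat t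
  | _ => U 3%nat t * V 0%nat t + 3 * (U 2%nat t * V 1%nat t) + 3 * (U 1%nat t * V 2%nat t)
         + U 0%nat t * V 3%nat t
  end.

Lemma derive_chain_leibniz3 U V : derive_chain U 2 -> derive_chain V 2 ->
  derive_chain (leibniz3 U V) 2.
Proof.
  intros HU HV k t Hk.
  assert (Hmul : forall i j, (i <= 2)%nat -> (j <= 2)%nat ->
    is_derive (fun s => U i s * V j s) t (U (S i) t * V j t + U i t * V (S j) t)).
  { intros i j Hi Hj. apply (is_derive_mult (U i) (V j)); auto.
    intros; apply Rmult_comm. }
  assert (Hval : forall (h : R -> R) a b, is_derive h t a -> a = b -> is_derive h t b)
    by (intros; subst; auto).
  destruct k as [|[|[|k]]]; try lia; cbn [leibniz3].
  - now apply Hmul.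
  - eapply Hval; [apply (is_derive_plus (fun s => U 1%nat s * V 0%nat s)
                                        (fun s => U 0%nat s * V 1%nat s)); apply Hmul; lia|].
    unfold plus; simpl. ring.
  - eapply Hval.
    + apply (is_derive_plus (fun s => U 2%nat s * V 0%nat s + 2 * (U 1%nat s * V 1%nat s))
                            (fun s => U 0%nat s * V 2%nat s)); [|apply Hmul; lia].
      apply (is_derive_plus (fun s => U 2%nat s * V 0%nat s)); [apply Hmul; lia|].
      apply (is_derive_scal (fun s => U 1%nat s * V 1%nat s)), Hmul; lia.
    + unfold plus, scal; simpl; unfold mult; simpl. ring.
Qed.

Lemma Derive_n_mult3 f g t : C3 f -> C3 g ->
  Derive_n (fun s => f s * g s) 3 t = leibniz3 (Derive_n f) (Derive_n g) 3 t.
Proof.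
  intros Hf Hg.
  apply (derive_chain_Derive_n _ 2
           (derive_chain_leibniz3 _ _ (C3_derive_chain f Hf) (C3_derive_chain g Hg))).
  lia.
Qed.

Lemma C3_mult_continuous3 f g t : C3 f -> C3 g ->
  continuous (Derive_n (fun s => f s * g s) 3) t.
Proof.
  intros Hf Hg.
  apply (continuous_ext (leibniz3 (Derive_n f) (Derive_n g) 3));
    [intros; symmetry; now apply Derive_n_mult3|].
  assert (Hplus : forall a b : R -> R, continuous a t -> continuous b t ->
                  continuous (fun s => a s + b s) t) by (intros; now apply (continuous_plus a b)).
  assert (Hmult : forall a b : R -> R, continuous a t -> continuous b t ->
                  continuous (fun s => a s * b s) t) by (intros; now apply (continuous_mult a b)).
  cbn [leibniz3].
  repeat first [ apply Hplus | apply Hmult | apply continuous_const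
               | apply C3_continuous; [assumption | lia] ].
Qed.

Lemma taylor_first_order_le f x y : C3 f -> 0 <= x <= 1 -> 0 <= y <= 1 ->
  Rabs (f y - f x - Derive f x * (y - x)) <= unorm (Derive_n f 2) / 2 * (y - x) ^ 2.
Proof.
  intros Hf Hx Hy.
  assert (H := taylor_remainder_le (Derive_n f) 1 (unorm (Derive_n f 2)) 0 1 x y
                 (fun k t Hk => C3_derive_chain f Hf k t ltac:(lia))
                 (fun t Ht => C3_unorm_ge f 2 t Hf ltac:(lia) Ht) Hx Hy).
  assert (Hpoly : taylor_poly (Derive_n f) 1 x y = f x + Derive f x * (y - x))
    by (unfold taylor_poly; simpl; change (Derive (fun t => f t) x) with (Derive f x); field).
  replace (INR (Factorial.fact 2)) with 2 in H by (simpl; ring).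
  rewrite Hpoly, pow2_abs in H.
  replace (f y - f x - Derive f x * (y - x)) with (f y - (f x + Derive f x * (y - x))) by ring.
  exact H.
Qed.

Definition center_chain (D : nat -> R -> R) (c : R) (k : nat) (t : R) : R :=
  match k with O => D O t - c | _ => D k t end.

Lemma derive_chain_center D N c : derive_chain D N -> derive_chain (center_chain D c) N.
Proof.
  intros HD [|k] t Hk; [|now apply HD].
  rewrite <- (Rminus_0_r (center_chain D c 1 t)).
  apply (is_derive_minus (D 0%nat) (fun _ => c)); [now apply HD | exact (is_derive_const c t)].
Qed.

Definition norm3 (f g : R -> R) : R :=
  unorm (Derive_n (fun t => f t * g t) 3) + unorm g * unorm (Derive_n f 3)
  + unorm f * unorm (Derive_n g 3).

Lemma norm3_ge0 f g : C3 f -> C3 g -> 0 <= norm3 f g.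
Proof.
  intros Hf Hg.
  assert (0 <= unorm (Derive_n (fun t => f t * g t) 3))
    by (apply unorm_ge0; intros; now apply C3_mult_continuous3).
  assert (0 <= unorm f * unorm (Derive_n g 3))
    by (apply Rmult_le_pos; [apply (C3_unorm_ge0 f 0) | apply C3_unorm_ge0]; auto).
  assert (0 <= unorm g * unorm (Derive_n f 3))
    by (apply Rmult_le_pos; [apply (C3_unorm_ge0 g 0) | apply C3_unorm_ge0]; auto).
  unfold norm3. lra.
Qed.

Lemma leibniz3_center_le f g x z : C3 f -> C3 g -> 0 <= x <= 1 -> 0 <= z <= 1 ->
  Rabs (leibniz3 (center_chain (Derive_n f) (f x)) (center_chain (Derive_n g) (g x)) 3 z)
  <= norm3 f g.
Proof.
  intros Hf Hg Hx Hz.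
  set (P := Derive_n (fun t => f t * g t) 3 z).
  set (A := Derive_n f 3 z * g x). set (B := f x * Derive_n g 3 z).
  replace (leibniz3 _ _ 3 z) with (P + - A + - B)
    by (unfold P, A, B; rewrite Derive_n_mult3 by assumption; cbn [leibniz3 center_chain]; ring).
  assert (HP : Rabs P <= unorm (Derive_n (fun t => f t * g t) 3))
    by (apply (unorm_ge _ (fun t _ => C3_mult_continuous3 f g t Hf Hg) z Hz)).
  assert (HA : Rabs A <= unorm g * unorm (Derive_n f 3)).
  { unfold A. rewrite Rabs_mult, Rmult_comm.
    apply Rmult_le_compat; auto using Rabs_pos, C3_unorm_ge.
    exact (C3_unorm_ge g 0 x Hg ltac:(lia) Hx). }
  assert (HB : Rabs B <= unorm f * unorm (Derive_n g 3)).
  { unfold B. rewrite Rabs_mult.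
    apply Rmult_le_compat; auto using Rabs_pos, C3_unorm_ge.
    exact (C3_unorm_ge f 0 x Hf ltac:(lia) Hx). }
  pose proof (Rabs_triang (P + - A) (- B)). pose proof (Rabs_triang P (- A)).
  rewrite !Rabs_Ropp in *. unfold norm3. lra.
Qed.

Lemma taylor_product_centered_le f g x y : C3 f -> C3 g -> 0 <= x <= 1 -> 0 <= y <= 1 ->
  Rabs ((f y - f x) * (g y - g x) - Derive f x * Derive g x * (y - x) ^ 2)
  <= norm3 f g / 6 * Rabs (y - x) ^ 3.
Proof.
  intros Hf Hg Hx Hy.
  set (D := leibniz3 (center_chain (Derive_n f) (f x)) (center_chain (Derive_n g) (g x))).
  assert (HD : derive_chain D 2)
    by (apply derive_chain_leibniz3; apply derive_chain_center; now apply C3_derive_chain).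
  assert (H := taylor_remainder_le D 2 _ 0 1 x y HD
                 (fun z Hz => leibniz3_center_le f g x z Hf Hg Hx Hz) Hx Hy).
  replace (INR (Factorial.fact 3)) with 6 in H by (simpl; ring).
  replace ((f y - f x) * (g y - g x) - Derive f x * Derive g x * (y - x) ^ 2)
    with (D 0%nat y - taylor_poly D 2 x y); [exact H|].
  unfold D, taylor_poly. cbn [leibniz3 center_chain sum_f_R0 Derive_n].
  change (Derive (fun t => f t) x) with (Derive f x).
  change (Derive (fun t => g t) x) with (Derive g x).
  simpl. field.
Qed.

Lemma binom_mean_cov_split n p (u v d : nat -> R) u0 v0 a b :
  binom_mean n p d = 0 ->
  binom_mean n p (fun k => u k * v k) - binom_mean n p u * binom_mean n p v
  - binom_mean n p (fun k => d k ^ 2) * a * b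
  = binom_mean n p (fun k => (u k - u0) * (v k - v0) - a * b * d k ^ 2)
    - binom_mean n p (fun k => u k - u0 - a * d k)
      * binom_mean n p (fun k => v k - v0 - b * d k).
Proof.
  intro Hd.
  rewrite (binom_mean_ext _ _ (fun k => (u k - u0) * (v k - v0) - a * b * d k ^ 2)
             (fun k => u k * v k + (- v0 * u k + (- u0 * v k + (- (a * b) * d k ^ 2 + u0 * v0)))))
    by (intros; ring).
  rewrite (binom_mean_ext _ _ (fun k => u k - u0 - a * d k) (fun k => u k + (- a * d k + - u0)))
    by (intros; ring).
  rewrite (binom_mean_ext _ _ (fun k => v k - v0 - b * d k) (fun k => v k + (- b * d k + - v0)))
    by (intros; ring).
  rewrite !binom_mean_plus, !binom_mean_scal, !binom_mean_const, Hd. ring.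
Qed.

Lemma grid_in_unit n k : (1 <= n)%nat -> (k <= n)%nat -> 0 <= INR k / INR n <= 1.
Proof.
  intros Hn Hk. assert (HN : 0 < INR n) by (apply lt_0_INR; lia).
  split; [apply Rdiv_le_0_compat; [apply pos_INR | exact HN]|].
  apply Rle_div_l; [exact HN|]. rewrite Rmult_1_l. now apply le_INR.
Qed.

Lemma binom_mean_taylor_first_order_le f x n : C3 f -> 0 <= x <= 1 -> (1 <= n)%nat ->
  Rabs (binom_mean n x (fun k => f (INR k / INR n) - f x - Derive f x * (INR k / INR n - x)))
  <= unorm (Derive_n f 2) / 2 * (x * (1 - x) / INR n).
Proof.
  intros Hf Hx Hn. rewrite <- binom_mean_grid_sq, <- binom_mean_scal by exact Hn.
  apply binom_mean_abs_bound; [exact Hx|]. intros k Hk.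
  now apply taylor_first_order_le, grid_in_unit.
Qed.

Lemma binom_mean_taylor_product_le f g x n : C3 f -> C3 g -> 0 <= x <= 1 -> (1 <= n)%nat ->
  Rabs (binom_mean n x (fun k => (f (INR k / INR n) - f x) * (g (INR k / INR n) - g x)
                                 - Derive f x * Derive g x * (INR k / INR n - x) ^ 2))
  <= norm3 f g / 3 * (x * (1 - x) / (INR n * sqrt (INR n))).
Proof.
  intros Hf Hg Hx Hn.
  assert (HK := norm3_ge0 f g Hf Hg).
  eapply Rle_trans.
  - apply (binom_mean_abs_bound _ _ _ (fun k => norm3 f g / 6 * Rabs (INR k / INR n - x) ^ 3));
      [exact Hx|].
    intros k Hk. now apply taylor_product_centered_le, grid_in_unit.
  - assert (0 < sqrt (INR n)) by (apply sqrt_lt_R0, lt_0_INR; lia).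
    assert (0 < INR n) by (apply lt_0_INR; lia).
    rewrite binom_mean_scal.
    replace (norm3 f g / 3 * _)
      with (norm3 f g / 6 * (2 * (x * (1 - x)) / (INR n * sqrt (INR n))))
      by (field; lra).
    apply Rmult_le_compat_l; [lra|]. now apply binom_mean_grid_abs_cube_le.
Qed.

Lemma error_combine_le n q K M e a b : (1 <= n)%nat -> 0 <= q <= 1 / 4 ->
  0 <= K -> 0 <= M ->
  Rabs e <= K / 3 * (q / (INR n * sqrt (INR n))) -> Rabs a * Rabs b <= M / 4 * (q / INR n) ^ 2 ->
  INR n * Rabs (e - a * b) <= q * (1 / sqrt (INR n)) * (K + M).
Proof.
  intros Hn Hq HK HM He Hab.
  assert (HN : 1 <= INR n) by (apply (le_INR 1); lia).
  assert (Htri := Rabs_triang e (- (a * b))).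
  rewrite Rabs_Ropp, Rabs_mult in Htri.
  set (s := sqrt (INR n)) in *.
  assert (Hs : 0 < s) by (apply sqrt_lt_R0; lra).
  assert (Hss : s * s = INR n) by (apply sqrt_sqrt; lra).
  assert (Hs1 : 1 <= s) by nra.
  rewrite <- Hss in He, Hab |- *.
  apply Rle_trans with (s * s * (K / 3 * (q / (s * s * s)) + M / 4 * (q / (s * s)) ^ 2)).
  { apply Rmult_le_compat_l; [nra|].
    exact (Rle_trans _ _ _ Htri (Rplus_le_compat _ _ _ _ He Hab)). }
  replace (s * s * _) with (q / s * (K / 3 + M * (q / (4 * s)))) by (field; lra).
  replace (q * (1 / s) * (K + M)) with (q / s * (K + M)) by (field; lra).
  apply Rmult_le_compat_l; [apply Rdiv_le_0_compat; lra|].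
  assert (q / (4 * s) <= 1) by (apply Rle_div_l; lra).
  nra.
Qed.

Theorem corollary2p2 :
  exists C : R, 0 < C /\
  forall (f g : R -> R) (x : R) (n : nat),
    C3 f -> C3 g -> 0 <= x <= 1 -> (1 <= n)%nat ->
    INR n * Rabs (bernstein n (fun t => f t * g t) x
                  - bernstein n f x * bernstein n g x
                  - x * (1 - x) / INR n * Derive f x * Derive g x)
    <= C * (x * (1 - x)) * (1 / sqrt (INR n)) *
       (unorm (Derive_n (fun t => f t * g t) 3)
        + unorm (Derive_n f 2) * unorm (Derive_n g 2)
        + unorm g * unorm (Derive_n f 3)
        + unorm f * unorm (Derive_n g 3)).
Proof.
  exists 1. split; [lra|]. intros f g x n Hf Hg Hx Hn.
  assert (HN : 0 < INR n) by (apply lt_0_INR; lia).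
  rewrite !bernstein_binom_mean, <- (binom_mean_grid_sq n x Hn).
  rewrite (binom_mean_cov_split n x _ _ (fun k => INR k / INR n - x) (f x) (g x) _ _
             (binom_mean_grid_dev n x Hn)).
  replace (1 * (x * (1 - x)) * _ * _) with
    (x * (1 - x) * (1 / sqrt (INR n)) *
     (norm3 f g + unorm (Derive_n f 2) * unorm (Derive_n g 2))) by (unfold norm3; ring).
  apply error_combine_le; auto using norm3_ge0, binom_mean_taylor_product_le.
  - pose proof (pow2_ge_0 (x - 1 / 2)). split; nra.
  - apply Rmult_le_pos; apply C3_unorm_ge0; auto.
  - replace (_ / 4 * _) with ((unorm (Derive_n f 2) / 2 * (x * (1 - x) / INR n))
                               * (unorm (Derive_n g 2) / 2 * (x * (1 - x) / INR n)))
      by (field; lra).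
    apply Rmult_le_compat; auto using Rabs_pos, binom_mean_taylor_first_order_le.
Qed.
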